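(* Let $n\ge 1$ and let $\mathbb{R}^n_t$ denote $\mathbb{R}^n$ equipped with a nondegenerate symmetric bilinear form $\eta$ of signature $(-t,+s)$, $t+s=n$, with pseudo-orthogonal group $O(t,n-t)=\{R\in GL(n,\mathbb{R}) : \eta(Rx,Ry)=\eta(x,y)\ \forall x,y\}$. Let $1\le m\le n$, let $u_1,\dots,u_m\in\mathbb{R}^n_t$ be linearly independent, and let $\mathsf{lat}=\{\sum_{i=1}^m z_i u_i : z_i\in\mathbb{Z}\}$ with $\mathbb{R}$-linear span $W=[\mathsf{lat}]$. Define $G_{\mathsf{lat}}=\{R\in O(t,n-t) : R\,\mathsf{lat}=\mathsf{lat}\}$ and $eG_{\mathsf{lat}}=\{R\in O(t,n-t) : R\,\mathsf{lat}\subset\mathsf{lat}\}$. If $ind(\mathsf{lat})=0$ or $ind(\mathsf{lat})=m$, then $eG_{\mathsf{lat}}=G_{\mathsf{lat}}$.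
   Context: The index $ind(V)$ of a vector subspace $V\subset\mathbb{R}^n_t$ is the maximum of the dimensions of subspaces $V'\subset V$ on which the restriction $\eta|_{V'}$ is negative definite; thus $ind(V)=0$ iff $\eta|_V$ is positive definite, and $ind(V)=\dim V$ iff $\eta|_V$ is negative definite. The index of the lattice is $ind(\mathsf{lat}):=ind(W)$, where $W$ is the $\mathbb{R}$-linear span of $\mathsf{lat}$ (so $\dim W=m$).
   Formalization: The case $ind(\mathsf{lat})=0$ means $\eta|_W$ positive definite, so spans W on which $\eta|_W$ is positive semidefinite but degenerate are excluded. The paper assumes this as well. *)

From mathcomp Require Import all_boot all_order all_algebra.
From mathcomp Require Import reals.
Set Implicit Arguments. Unset Strict Implicit. Unset Printing Implicit Defensive.
Import Order.TTheory GRing.Theory Num.Theory.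
Local Open Scope ring_scope.

Section Defs.
Variable R : realType.

Definition etaJ (n t : nat) : 'M[R]_n :=
  \matrix_(i, j) (if i == j then (if (i < t)%N then -1 else 1) else 0).

Definition eta (n t : nat) (x y : 'cV[R]_n) : R :=
  ((x^T *m etaJ n t) *m y) 0 0.

Definition in_O (n t : nat) (M : 'M[R]_n) : Prop :=
  M \in unitmx /\ forall x y : 'cV[R]_n, eta t (M *m x) (M *m y) = eta t x y.

Definition lin_indep (n m : nat) (u : 'I_m -> 'cV[R]_n) : Prop :=
  forall c : 'I_m -> R, \sum_(i < m) c i *: u i = 0 -> forall i, c i = 0.

Definition in_lat (n m : nat) (u : 'I_m -> 'cV[R]_n) (v : 'cV[R]_n) : Prop :=
  exists z : 'I_m -> int, v = \sum_(i < m) (z i)%:~R *: u i.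

Definition in_span (n m : nat) (u : 'I_m -> 'cV[R]_n) (v : 'cV[R]_n) : Prop :=
  exists c : 'I_m -> R, v = \sum_(i < m) c i *: u i.

(* eta restricted to W is positive definite, i.e. ind(lat) = 0 *)
Definition pos_def_on_span (n t m : nat) (u : 'I_m -> 'cV[R]_n) : Prop :=
  forall w, in_span u w -> w != 0 -> 0 < eta t w w.

(* eta restricted to W is negative definite, i.e. ind(lat) = m = dim W *)
Definition neg_def_on_span (n t m : nat) (u : 'I_m -> 'cV[R]_n) : Prop :=
  forall w, in_span u w -> w != 0 -> eta t w w < 0.

Definition in_eG (n t m : nat) (u : 'I_m -> 'cV[R]_n) (M : 'M[R]_n) : Prop :=
  in_O t M /\ forall v, in_lat u v -> in_lat u (M *m v).

Definition in_G (n t m : nat) (u : 'I_m -> 'cV[R]_n) (M : 'M[R]_n) : Prop :=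
  in_O t M /\ (forall v, in_lat u v -> in_lat u (M *m v))
           /\ (forall v, in_lat u v -> exists w, in_lat u w /\ M *m w = v).

End Defs.

(* If R maps the lattice into itself, R u_j = sum_i a_ij u_i for an integral
   matrix A, and R preserving eta means A^T G A = G for the Gram matrix G of eta
   on the basis u.  When eta is definite on W, G is invertible, so
   (det A)^2 = 1; hence A is invertible over Z and R^-1 also maps the lattice
   into itself. *)
From mathcomp Require Import all_boot all_order all_algebra.
From mathcomp Require Import reals.
Set Implicit Arguments. Unset Strict Implicit. Unset Printing Implicit Defensive.
Import Order.TTheory GRing.Theory Num.Theory.
Local Open Scope ring_scope.

Lemma det_sqr_eq1_of_congruence (F : fieldType) (k : nat) (G A : 'M[F]_k) :
  \det G != 0 -> A^T *m G *m A = G -> \det A ^+ 2 = 1.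
Proof.
move=> detG_neq0 AGA; apply: (mulIf detG_neq0).
by rewrite mul1r -{2}AGA !det_mulmx det_tr expr2 mulrAC.
Qed.

Lemma intmx_unit_of_det_sqr (R : numDomainType) (k : nat) (A : 'M[int]_k) :
  \det (map_mx (intr : int -> R) A) ^+ 2 = 1 -> A \in unitmx.
Proof.
rewrite det_map_mx -rmorphXn -(rmorph1 (intr : int -> R)) => /intr_inj detA2.
by rewrite unitmxE; apply/GRing.unitrP; exists (\det A); rewrite -expr2 detA2.
Qed.

Lemma in_O_mx (R : realType) (n t : nat) (M : 'M[R]_n) :
  in_O t M -> M^T *m @etaJ R n t *m M = @etaJ R n t.
Proof.
case=> _ eta_inv; apply/matrixP => i j.
have entry (X : 'M[R]_n) :
    X i j = (delta_mx (0 : 'I_1) i *m X *m delta_mx j (0 : 'I_1)) 0 0.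
  by rewrite -rowE -colE !mxE.
rewrite [LHS]entry [RHS]entry; have := eta_inv (delta_mx i 0) (delta_mx j 0).
by rewrite /eta !trmx_mul !trmx_delta !mulmxA.
Qed.

Section LatticeBasis.
Variables (R : realType) (n m : nat) (u : 'I_m -> 'cV[R]_n).

Definition basis_mx : 'M[R]_(n, m) := \matrix_(k, j) u j k 0.

Lemma basis_mxE (c : 'cV[R]_m) : basis_mx *m c = \sum_j c j 0 *: u j.
Proof.
apply/matrixP => k l; rewrite !mxE summxE; apply: eq_bigr => j _.
by rewrite !mxE (ord1 l) mulrC.
Qed.

Lemma basis_mx_delta j : basis_mx *m delta_mx j 0 = u j.
Proof. by rewrite -colE; apply/matrixP => k l; rewrite !mxE (ord1 l). Qed.

Lemma in_latP v :
  in_lat u v <-> exists z : 'cV[int]_m, v = basis_mx *m map_mx intr z.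
Proof.
split=> [[z ->]|[z ->]].
  by exists (\col_j z j); rewrite basis_mxE; apply: eq_bigr => j _; rewrite !mxE.
by exists (fun j => z j 0); rewrite basis_mxE; apply: eq_bigr => j _; rewrite !mxE.
Qed.

Lemma in_lat_basis j : in_lat u (u j).
Proof.
apply/in_latP; exists (delta_mx j 0); rewrite -[LHS]basis_mx_delta.
by congr (_ *m _); apply/matrixP => a b; rewrite !mxE; case: (_ && _).
Qed.

Lemma lat_stable_intmx (M : 'M[R]_n) :
  (forall v, in_lat u v -> in_lat u (M *m v)) ->
  exists A : 'M[int]_m, M *m basis_mx = basis_mx *m map_mx intr A.
Proof.
move=> Mlat.
have /fin_all_exists [z Mu] : forall j, exists z : 'cV[int]_m,
    M *m u j = basis_mx *m map_mx intr z.
  by move=> j; apply/in_latP/Mlat/in_lat_basis.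
exists (\matrix_(i, j) z j i 0); apply/matrixP => k j.
have /matrixP/(_ k 0) := Mu j; rewrite !mxE => Mukj.
rewrite (eq_bigr (fun l => M k l * u j l 0)) => [|l _]; last by rewrite !mxE.
by rewrite Mukj; apply: eq_bigr => l _; rewrite !mxE.
Qed.

Lemma lat_preimage (M : 'M[R]_n) (A : 'M[int]_m) :
  M *m basis_mx = basis_mx *m map_mx intr A -> A \in unitmx ->
  forall v, in_lat u v -> exists w, in_lat u w /\ M *m w = v.
Proof.
move=> MU unitA v /in_latP [y ->].
exists (basis_mx *m map_mx intr (invmx A *m y)); split.
  by apply/in_latP; exists (invmx A *m y).
by rewrite mulmxA MU -mulmxA -map_mxM mulmxA mulmxV // mul1mx.
Qed.

Variable t : nat.

Definition gram_mx : 'M[R]_m := basis_mx^T *m @etaJ R n t *m basis_mx.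

Lemma eta_basis_mx (c : 'cV[R]_m) :
  eta t (basis_mx *m c) (basis_mx *m c) = (c^T *m gram_mx *m c) 0 0.
Proof. by rewrite /eta /gram_mx trmx_mul !mulmxA. Qed.

Lemma gram_mx_congruence (M : 'M[R]_n) (A : 'M[R]_m) :
  M^T *m @etaJ R n t *m M = @etaJ R n t -> M *m basis_mx = basis_mx *m A ->
  A^T *m gram_mx *m A = gram_mx.
Proof.
move=> MJM MU.
have -> : A^T *m gram_mx *m A =
    (basis_mx *m A)^T *m @etaJ R n t *m (basis_mx *m A).
  by rewrite /gram_mx trmx_mul !mulmxA.
by rewrite -MU trmx_mul -!mulmxA (mulmxA M^T) (mulmxA (M^T *m _)) MJM !mulmxA.
Qed.

Lemma det_gram_mx_neq0 :
  lin_indep u -> (forall w, in_span u w -> w != 0 -> eta t w w != 0) ->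
  \det gram_mx != 0.
Proof.
move=> indep anisotropic; apply/negP => /det0P [v v_neq0 vG].
have span_v : in_span u (basis_mx *m v^T).
  by exists (fun j => v 0 j); rewrite basis_mxE; apply: eq_bigr => j _; rewrite !mxE.
have : basis_mx *m v^T != 0.
  apply: contra v_neq0 => /eqP Uv0; apply/eqP/matrixP => a j.
  rewrite (ord1 a) mxE; apply: (indep (fun j => v 0 j)).
  by rewrite -[RHS]Uv0 basis_mxE; apply: eq_bigr => l _; rewrite !mxE.
move/(anisotropic _ span_v); rewrite eta_basis_mx trmxK vG mul0mx mxE.
by rewrite eqxx.
Qed.

End LatticeBasis.

Lemma definite_anisotropic (R : realType) (n t m : nat) (u : 'I_m -> 'cV[R]_n) :
  pos_def_on_span t u \/ neg_def_on_span t u ->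
  forall w, in_span u w -> w != 0 -> eta t w w != 0.
Proof.
by case=> def w span_w w_neq0; [rewrite gt_eqF | rewrite lt_eqF]; rewrite ?def.
Qed.

Theorem theorem1 (R : realType) (n t m : nat) (u : 'I_m -> 'cV[R]_n) :
  (1 <= n)%N -> (t <= n)%N -> (1 <= m)%N -> (m <= n)%N ->
  lin_indep u ->
  (pos_def_on_span t u \/ neg_def_on_span t u) ->
  forall M : 'M[R]_n, in_eG t u M <-> in_G t u M.
Proof.
move=> _ _ _ _ indep definite M; split; last by case=> MO [Mlat _].
case=> MO Mlat; have [A MU] := lat_stable_intmx Mlat.
have AGA := gram_mx_congruence (in_O_mx MO) MU.
have detG_neq0 := det_gram_mx_neq0 indep (definite_anisotropic definite).
have unitA := intmx_unit_of_det_sqr (det_sqr_eq1_of_congruence detG_neq0 AGA).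
by split=> //; split=> //; exact: lat_preimage MU unitA.
Qed.
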